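(* Let $f:A\to B$ be a homomorphism of abelian groups and let $\kappa$ be an infinite regular cardinal greater than the minimal number of generators of $A$. If $D$ is $L_f$-local, then $D^{\kappa}_{<\kappa}$ is $L_f$-local.
   Context: All groups are abelian. A homomorphism $f:X\to Y$ is orthogonal to a group $B$ if composition with $f$ induces a bijection $\mathop{\rm Hom}(Y,B)\to\mathop{\rm Hom}(X,B)$. For a homomorphism $f$, the $f$-localization $L_f$ is the localization functor whose local groups are exactly the groups $D$ to which $f$ is orthogonal ($L_f$-local means $f$ is orthogonal to $D$). For cardinals $\kappa\geq\lambda$ with $\lambda$ infinite, $D^\kappa_{<\lambda}$ denotes the subgroup of $\prod_\kappa D$ consisting of those elements whose support has cardinality less than $\lambda$. *)

(* Abelian groups are zmodType's; cardinals are represented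
   by types, compared via injections. *)
From HB Require Import structures.
From mathcomp Require Import all_boot all_order all_algebra.
Set Implicit Arguments. Unset Strict Implicit. Unset Printing Implicit Defensive.
Import GRing.Theory.
Local Open Scope ring_scope.

Definition card_le (X Y : Type) : Prop := exists h : X -> Y, injective h.
Definition card_lt (X Y : Type) : Prop := card_le X Y /\ ~ card_le Y X.

Definition infinite_card (K : Type) : Prop := card_le nat K.

Definition regular_card (K : Type) : Prop :=
  infinite_card K /\
  forall (I : Type) (S : I -> K -> Prop),
    card_lt I K ->
    (forall i, card_lt {k : K | S i k} K) ->
    card_lt {k : K | exists i, S i k} K.

Definition is_hom (X Y : zmodType) (h : X -> Y) : Prop :=
  forall x y, h (x - y) = h x - h y.

Definition generates (A : zmodType) (G : Type) (g : G -> A) : Prop :=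
  forall P : A -> Prop, P 0 -> (forall x y, P x -> P y -> P (x - y)) ->
    (forall i, P (g i)) -> forall a, P a.

Definition gen_num_lt (A : zmodType) (K : Type) : Prop :=
  exists (G : Type) (g : G -> A), generates g /\ card_lt G K.

(* f : A -> B is orthogonal to D: precomposition with f is a bijection
   Hom(B,D) -> Hom(A,D) (injective and surjective). *)
Definition orthogonal (A B : zmodType) (f : A -> B) (D : zmodType) : Prop :=
  (forall h1 h2 : B -> D, is_hom h1 -> is_hom h2 ->
     (forall a, h1 (f a) = h2 (f a)) -> forall b, h1 b = h2 b) /\
  (forall g : A -> D, is_hom g ->
     exists h : B -> D, is_hom h /\ forall a, h (f a) = g a).

Definition Lf_local (A B : zmodType) (f : A -> B) (D : zmodType) : Prop :=
  orthogonal f D.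

(* element x of prod_K D lies in D^K_{<K}: its support has cardinality < |K| *)
Definition small_support (K : Type) (D : zmodType) (x : K -> D) : Prop :=
  card_lt {k : K | x k != 0} K.

(* homomorphisms X -> D^K_{<K}: maps into prod_K D, additive (coordinatewise
   group operations), with values in D^K_{<K} *)
Definition is_hom_small (K : Type) (X D : zmodType) (h : X -> K -> D) : Prop :=
  (forall x y k, h (x - y) k = h x k - h y k) /\
  (forall x, small_support (h x)).

(* f is orthogonal to the group D^K_{<K}; elements of D^K_{<K} are equal iff
   they agree at each coordinate. *)
Definition Lf_local_small (A B : zmodType) (f : A -> B) (K : Type) (D : zmodType)
  : Prop :=
  (forall h1 h2 : B -> K -> D, is_hom_small h1 -> is_hom_small h2 ->
     (forall a k, h1 (f a) k = h2 (f a) k) -> forall b k, h1 b k = h2 b k) /\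
  (forall g : A -> K -> D, is_hom_small g ->
     exists h : B -> K -> D, is_hom_small h /\ forall a k, h (f a) k = g a k).

(* Since f is orthogonal to D, every coordinate g(-)_k : A -> D of a
   homomorphism g : A -> D^K_{<K} extends uniquely along f to some
   h_k : B -> D, and uniqueness makes the coordinatewise extension h the only
   candidate.  The point is that h lands in D^K_{<K}: if g vanishes at k on
   all generators of A, then g(-)_k = 0 and hence h_k = 0, so the support of
   every h b lies in the union of the supports of g at the fewer than |K|
   generators, which is small by regularity of K. *)

From mathcomp Require Import all_boot all_order all_algebra.
From Stdlib Require Import IndefiniteDescription Classical.
Set Implicit Arguments. Unset Strict Implicit.
Import GRing.Theory.
Local Open Scope ring_scope.

Lemma card_le_trans (X Y Z : Type) : card_le X Y -> card_le Y Z -> card_le X Z.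
Proof.
by move=> [h hinj] [h' h'inj]; exists (h' \o h); exact: inj_comp.
Qed.

Lemma card_le_lt_trans (X Y K : Type) : card_le X Y -> card_lt Y K -> card_lt X K.
Proof.
move=> leXY [leYK nleKY]; split; first exact: card_le_trans leYK.
by move=> leKX; apply: nleKY; exact: card_le_trans leXY.
Qed.

Lemma card_lt_subset (K : Type) (P Q : K -> Prop) :
  (forall k, P k -> Q k) -> card_lt {k | Q k} K -> card_lt {k | P k} K.
Proof.
move=> subPQ; apply: card_le_lt_trans.
exists (fun x => exist Q (sval x) (subPQ _ (svalP x))) => x y /(congr1 sval) /=.
by apply: eq_sig_hprop => k; exact: proof_irrelevance.
Qed.

Lemma hom0 (X Y : zmodType) (h : X -> Y) : is_hom h -> h 0 = 0.
Proof. by move=> hom_h; rewrite -(subrr (0 : X)) hom_h subrr. Qed.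

Lemma hom_eq0_on_generators (A D : zmodType) (G : Type) (gi : G -> A)
    (g : A -> D) :
  generates gi -> is_hom g -> (forall i, g (gi i) = 0) -> forall a, g a = 0.
Proof.
move=> gen_gi hom_g g_gi; apply: gen_gi => //; first exact: hom0.
by move=> x y gx gy; rewrite hom_g gx gy subrr.
Qed.

Lemma is_hom_small_coord (K : Type) (X D : zmodType) (h : X -> K -> D) (k : K) :
  is_hom_small h -> is_hom (fun x => h x k).
Proof. by move=> [hom_h _] x y; rewrite hom_h. Qed.

Section Orthogonal.

Variables (A B D : zmodType) (f : A -> B).
Hypothesis orth : orthogonal f D.

Lemma orthogonal_ext_eq0 (h : B -> D) :
  is_hom h -> (forall a, h (f a) = 0) -> forall b, h b = 0.
Proof.
move=> hom_h hf0; apply: (orth.1 h (fun _ => 0)) => // x y.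
by rewrite subrr.
Qed.

Lemma orthogonal_ext_family (I : Type) (g : I -> A -> D) :
  (forall i, is_hom (g i)) ->
  exists h : I -> B -> D, forall i, is_hom (h i) /\ forall a, h i (f a) = g i a.
Proof.
move=> hom_g; apply: (functional_choice
  (fun i (hi : B -> D) => is_hom hi /\ forall a, hi (f a) = g i a)) => i.
exact: orth.2.
Qed.

End Orthogonal.

Theorem lemma3 (A B : zmodType) (f : A -> B) (K : Type) (D : zmodType) :
  is_hom f -> regular_card K -> gen_num_lt A K ->
  Lf_local f D -> Lf_local_small f K D.
Proof.
move=> _ [_ reg_K] [G [gi [gen_gi ltGK]]] orth; split.
  move=> h1 h2 hom_h1 hom_h2 eq_hf b k.
  exact: (orth.1 _ _ (is_hom_small_coord k hom_h1) (is_hom_small_coord k hom_h2)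
           (fun a => eq_hf a k) b).
move=> g hom_g.
have [h hP] := orthogonal_ext_family orth (g := fun k a => g a k)
  (fun k => is_hom_small_coord k hom_g).
pose supp_gen := fun i k => g (gi i) k != 0.
have small_supp := reg_K G supp_gen ltGK (fun i => hom_g.2 (gi i)).
have supp_h b k : h k b != 0 -> exists i, supp_gen i k.
  move=> /eqP h_nz; apply: NNPP => /not_ex_all_not g_gen0; apply: h_nz.
  apply: (orthogonal_ext_eq0 orth (hP k).1) => a; rewrite (hP k).2.
  apply: hom_eq0_on_generators gen_gi (is_hom_small_coord k hom_g) _ a.
  by move=> i; apply/eqP/negbNE/negP; exact: g_gen0.
exists (fun b k => h k b); split; last by move=> a k; rewrite (hP k).2.
split; first by move=> x y k; rewrite (hP k).1.
by move=> b; exact: card_lt_subset (supp_h b) small_supp.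
Qed.
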